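(* Let $\Pi$ be a closed subset of $S^1$ such that $S^1\setminus\Pi$ is a disjoint union of open intervals each of length less than $\pi$. Then for every planar convex body $K$ the following are equivalent: (1) $K=\bigcap_{t\in\Pi}H_K(t)$; (2) $\mathbf{n}(K)\subseteq\Pi$.
   Context: A planar convex body is a nonempty compact convex subset of $\mathbb{R}^2$ (possibly with empty interior). $S^1=\mathbb{R}/2\pi\mathbb{Z}$. For $t$ let $u_t=(\cos t,\sin t)$; $p_K(t)=\max_{p\in K}p\cdot u_t$; $H_K(t)=\{p:p\cdot u_t\le p_K(t)\}$ is the tangent half-plane. $\sigma_K$ is the surface area measure of $K$ on $S^1$ (Schneider's $S_1(K,\cdot)$), and $\mathbf{n}(K)$ is the support of $\sigma_K$. *)

From HB Require Import structures.
From mathcomp Require Import all_boot all_order all_algebra.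
From mathcomp Require Import all_classical all_reals all_analysis.
Set Implicit Arguments. Unset Strict Implicit. Unset Printing Implicit Defensive.
Import Order.TTheory GRing.Theory Num.Theory.
Import numFieldNormedType.Exports.
Local Open Scope classical_set_scope.
Local Open Scope ring_scope.

Section Planar.
Variable R : realType.
Implicit Types (K : set (R * R)) (t : R).

Definition dist2 (x y : R * R) : R :=
  Num.sqrt ((x.1 - y.1) ^+ 2 + (x.2 - y.2) ^+ 2).

Definition convex_body K : Prop :=
  [/\ K !=set0, compact K &
      forall x y, K x -> K y -> forall l : R, 0 <= l <= 1 ->
        K ((1 - l) * x.1 + l * y.1, (1 - l) * x.2 + l * y.2)].

Definition dotu (x : R * R) t : R := x.1 * cos t + x.2 * sin t.

(* support function p_K(t) = max_{p in K} p . u_t (max = sup, K compact) *)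
Definition suppf K t : R := sup [set dotu x t | x in K].

Definition halfplane K t : set (R * R) := [set p | dotu p t <= suppf K t].

(* diameter (0 for the empty set) *)
Definition diam (C : set (R * R)) : \bar R :=
  ereal_sup ([set 0%E] `|` [set (dist2 x y)%:E | x in C & y in C]).

Definition hausdorff1_delta (d : R) (A : set (R * R)) : \bar R :=
  ereal_inf [set (\sum_(0 <= n <oo) diam (C n))%E |
     C in [set C : nat -> set (R * R) |
            A `<=` \bigcup_n C n /\ forall n, (diam (C n) <= d%:E)%E]].

Definition hausdorff1 (A : set (R * R)) : \bar R :=
  ereal_sup [set hausdorff1_delta d A | d in [set d : R | 0 < d]].

(* reverse spherical image: a set of directions on S^1 = R/2piZ is given by a
   set w of angles (representatives in R) *)
Definition rev_sph_image K (w : set R) : set (R * R) :=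
  [set x | K x /\ exists2 s, w s & dotu x s = suppf K s].

Definition surf_area K (w : set R) : \bar R := hausdorff1 (rev_sph_image K w).

Definition arc t (e : R) : set R := [set s | t - e < s < t + e].

(* n(K) = support of sigma_K (as a 2pi-periodic set of angles):
   t is in the support iff every open neighbourhood of t has positive measure *)
Definition normals K : set R :=
  [set t | forall e : R, 0 < e -> (0 < surf_area K (arc t e))%E].

(* a subset of S^1 represented as a 2pi-periodic subset of R *)
Definition periodic2pi (P : set R) : Prop :=
  forall t, P t <-> P (t + 2 * pi).

(* the image in S^1 of the open interval (a, b) of R, as a periodic set *)
Definition open_arc (a b : R) : set R :=
  [set t | exists k : int, a < t + (k%:~R) * (2 * pi) < b].

End Planar.

From Pilot Require Import Defs.
From HB Require Import structures.
From mathcomp Require Import all_boot all_order all_algebra.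
From mathcomp Require Import all_classical all_reals all_analysis.
From mathcomp Require Import ring lra zify.
Import Order.TTheory GRing.Theory Num.Theory.
Import numFieldNormedType.Exports.
Local Open Scope classical_set_scope.
Local Open Scope ring_scope.
Set Implicit Arguments. Unset Strict Implicit. Unset Printing Implicit Defensive.

(* (1) -> (2).  Let t lie in a gap (a, b) of Pi and let y be a support point
   of K in a direction s of the gap.  Then y is also a support point in the
   directions a and b: otherwise y could be pushed slightly outwards without
   leaving any half-plane H_K(t'), t' in Pi.  As b - a < pi, a and b determine
   y, so the reverse spherical image of a small arc around t is a single point,
   of zero length.
   (2) -> (1).  The nearest point q of K to a point x outside K has x - q as an
   outer normal, in a direction t0 that is not in Pi.  The frontier of the
   normal cone of q inside the gap of t0 would be a direction where nearby
   directions have other support points; an intermediate value argument then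
   gives positive length to the reverse spherical image of every arc around it,
   contradicting (2).  So the normal cone of q contains both ends of the gap,
   and x violates the half-plane at the end within pi/2 of t0. *)

Section Periodic.
Variable R : realType.

Lemma periodicz (T : Type) (f : R -> T) (p : R) :
  (forall x, f (x + p) = f x) -> forall (k : int) x, f (x + k%:~R * p) = f x.
Proof.
move=> fp.
have fpn (n : nat) x : f (x + n%:R * p) = f x.
  elim: n x => [|n IHn] x; first by rewrite mul0r addr0.
  by rewrite -addn1 natrD mulrDl mul1r addrA fp IHn.
case=> n x; first exact: fpn.
by rewrite NegzE mulrNz mulNr -pmulrn -[in RHS](subrK (n.+1%:R * p) x) fpn.
Qed.

Lemma cos_periodicz (k : int) (t : R) : cos (t + k%:~R * (2 * pi)) = cos t.
Proof. by apply: periodicz => x; rewrite mulr_natl; exact: cosD2pi. Qed.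

Lemma sin_periodicz (k : int) (t : R) : sin (t + k%:~R * (2 * pi)) = sin t.
Proof. by apply: periodicz => x; rewrite mulr_natl; exact: sinD2pi. Qed.

Lemma dotu_periodicz (k : int) (x : R * R) t :
  dotu x (t + k%:~R * (2 * pi)) = dotu x t.
Proof. by rewrite /dotu cos_periodicz sin_periodicz. Qed.

Lemma suppf_periodicz (K : set (R * R)) (k : int) t :
  suppf K (t + k%:~R * (2 * pi)) = suppf K t.
Proof. by congr sup; apply: eq_imagel => y _; rewrite dotu_periodicz. Qed.

Lemma periodic2piz (P : set R) : periodic2pi P ->
  forall (k : int) t, P (t + k%:~R * (2 * pi)) <-> P t.
Proof.
move=> Pp k t; rewrite (periodicz (f := P)) // => x.
exact/esym/propext/Pp.
Qed.

Lemma cos_gt0_shift (t sg : R) : 0 < cos (t - sg) ->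
  exists k : int, sg - pi / 2 < t + k%:~R * (2 * pi) < sg + pi / 2.
Proof.
move=> ct; have pi0 : 0 < pi :> R := pi_gt0 R.
set x := (sg + pi - t) / (2 * pi); exists (Num.floor x).
set t' := t + _ * _.
have /andP[x1 x2] := floor_itv x; rewrite intrD in x2.
rewrite /x ler_pdivlMr ?mulr_gt0 // in x1.
rewrite /x ltr_pdivrMr ?mulr_gt0 // in x2.
have t'1 : sg - pi < t' by rewrite /t'; lra.
have t'2 : t' <= sg + pi by rewrite /t'; lra.
have ct' : 0 < cos `|t' - sg| by rewrite cos_norm /t' addrAC cos_periodicz.
suff : `|t' - sg| < pi / 2 by rewrite ltr_norml; lra.
rewrite ltNge; apply/negP => le_t'.
have le_pi : `|t' - sg| <= pi by rewrite ler_norml; lra.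
have : 0 <= sin (`|t' - sg| - pi / 2) by apply: sin_ge0_pi; lra.
by rewrite sinBpihalf; lra.
Qed.

End Periodic.

Section SupportPoints.
Variable R : realType.
Implicit Types (K : set (R * R)) (x y z : R * R) (s t : R).

Definition outer_normal K y t := K y /\ forall z, K z -> dotu z t <= dotu y t.

Lemma continuous_dotu t : continuous (fun y : R * R => dotu y t).
Proof.
move=> y; apply: cvgD; apply: cvgM; try apply: cvg_cst.
- exact: cvg_fst.
- exact: cvg_snd.
Qed.

Lemma continuous_dotu_angle y : continuous (dotu y).
Proof.
move=> u; apply: cvgD; apply: cvgM; try apply: cvg_cst.
- exact: continuous_cos.
- exact: continuous_sin.
Qed.

Lemma outer_normal_exists K t : convex_body K -> exists y, outer_normal K y t.
Proof.
case=> K0 cK _.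
have [y Ky ymax] := compact_EVT_max K0 cK (continuous_subspaceT (@continuous_dotu t)).
by exists y; split=> [|z Kz]; [rewrite inE in Ky | apply: ymax; rewrite inE].
Qed.

Lemma suppf_outer_normal K y t : outer_normal K y t -> suppf K t = dotu y t.
Proof.
move=> [Ky ymax]; apply/eqP; rewrite eq_le; apply/andP; split.
  by apply: ge_sup; [exists (dotu y t), y | move=> _ [z Kz <-]; exact: ymax].
apply: sup_upper_bound; last by exists y.
split; first by exists (dotu y t), y.
by exists (dotu y t) => _ [z Kz <-]; exact: ymax.
Qed.

Lemma dotu_le_suppf K z t : convex_body K -> K z -> dotu z t <= suppf K t.
Proof.
move=> cK Kz; have [y yt] := outer_normal_exists t cK.
by rewrite (suppf_outer_normal yt); apply: yt.2.
Qed.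

Lemma outer_normal_suppf K y t : convex_body K -> K y ->
  dotu y t = suppf K t -> outer_normal K y t.
Proof. by move=> cK Ky yt; split=> // z Kz; rewrite yt; exact: dotu_le_suppf. Qed.

Lemma outer_normal_periodicz K y (k : int) t :
  outer_normal K y (t + k%:~R * (2 * pi)) <-> outer_normal K y t.
Proof.
by split=> -[Ky ymax]; split=> // z Kz; move: (ymax z Kz); rewrite !dotu_periodicz.
Qed.

(* [sin (t - s) u_r = sin (t - r) u_s + sin (r - s) u_t], with nonnegative weights. *)
Lemma outer_normal_between K y s r t : outer_normal K y s -> outer_normal K y t ->
  s <= r <= t -> t - s < pi -> outer_normal K y r.
Proof.
move=> [Ky ys] [_ yt] /andP[sr rt] ts; split=> // z Kz.
have [eq_st|st] := eqVneq s t.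
  subst t; have -> : r = s by apply/eqP; rewrite eq_le rt sr.
  exact: ys.
have s_lt_t : s < t by rewrite lt_neqAle st (le_trans sr rt).
have sin_ts : 0 < sin (t - s) by apply: sin_gt0_pi; rewrite ts subr_gt0 s_lt_t.
have sin_tr : 0 <= sin (t - r) by apply: sin_ge0_pi; lra.
have sin_rs : 0 <= sin (r - s) by apply: sin_ge0_pi; lra.
have decomp w : sin (t - s) * dotu w r = sin (t - r) * dotu w s + sin (r - s) * dotu w t.
  by rewrite /dotu !sinB; ring.
rewrite -(ler_pM2l sin_ts) !decomp.
by apply: lerD; apply: ler_wpM2l => //; [exact: ys | exact: yt].
Qed.

Lemma outer_normal_segment K y0 y1 t (l : R) : convex_body K ->
  outer_normal K y0 t -> outer_normal K y1 t -> 0 <= l <= 1 ->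
  outer_normal K ((1 - l) * y0.1 + l * y1.1, (1 - l) * y0.2 + l * y1.2) t.
Proof.
move=> cK y0t y1t l01; apply: outer_normal_suppf => //.
  by case: cK => _ _; apply; [exact: y0t.1 | exact: y1t.1 |].
transitivity ((1 - l) * dotu y0 t + l * dotu y1 t); first by rewrite /dotu /=; ring.
by rewrite -(suppf_outer_normal y0t) -(suppf_outer_normal y1t); ring.
Qed.

Lemma convex_body_bounded K : convex_body K ->
  exists2 M : R, 0 < M & forall y, K y -> `|y.1| + `|y.2| <= M.
Proof.
case=> K0 cK _.
have cont : continuous (fun y : R * R => `|y.1| + `|y.2|).
  by move=> y; apply: cvgD; apply: cvg_norm; [exact: cvg_fst | exact: cvg_snd].
have [c _ cmax] := compact_EVT_max K0 cK (continuous_subspaceT cont).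
exists (`|c.1| + `|c.2| + 1) => [|y Ky]; first by rewrite ltr_pwDr // addr_ge0.
by rewrite (le_trans (cmax y _)) ?inE // lerDl.
Qed.

Lemma dotu_equicontinuous K c (eta : R) : convex_body K -> 0 < eta ->
  exists2 dl : R, 0 < dl & forall s y, `|c - s| < dl -> K y ->
    `|dotu y c - dotu y s| <= eta.
Proof.
move=> cK eta0; have [M M0 Mb] := convex_body_bounded cK.
have e0 : 0 < eta / M by rewrite divr_gt0.
have : \forall s \near c, `|cos c - cos s| < eta / M /\ `|sin c - sin s| < eta / M.
  apply: filterS2 => [s cs ss||]; first exact: conj cs ss.
  - exact: cvgr_dist_lt (@continuous_cos R c) _ e0.
  - exact: cvgr_dist_lt (@continuous_sin R c) _ e0.
move=> /nbhs_normP[dl dl0 near_c]; exists dl => // s y cs Ky.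
have [cos_cs sin_cs] := near_c s cs.
have -> : dotu y c - dotu y s = y.1 * (cos c - cos s) + y.2 * (sin c - sin s).
  by rewrite /dotu; ring.
rewrite (le_trans (ler_normD _ _)) // !normrM.
apply: (@le_trans _ _ ((`|y.1| + `|y.2|) * (eta / M))).
  by rewrite mulrDl; apply: lerD; apply: ler_wpM2l => //; apply: ltW.
by rewrite -[leRHS](@divfK _ M) ?gt_eqF // mulrC ler_wpM2l ?Mb // ltW.
Qed.

Lemma continuous_suppf K : convex_body K -> continuous (suppf K).
Proof.
move=> cK c; apply/cvgrPdist_lt => e e0.
have [dl dl0 equi] := dotu_equicontinuous c cK (divr_gt0 e0 (ltr0n R 2)).
apply/nbhs_normP; exists dl => // s /= cs.
have [yc yc_c] := outer_normal_exists c cK; have [ys ys_s] := outer_normal_exists s cK.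
rewrite (suppf_outer_normal yc_c) (suppf_outer_normal ys_s).
have := equi s yc cs yc_c.1; have := equi s ys cs ys_s.1.
have := yc_c.2 _ ys_s.1; have := ys_s.2 _ yc_c.1.
rewrite !ler_norml ltr_norml; lra.
Qed.

Lemma outer_normal_near K c (eta : R) : convex_body K -> 0 < eta ->
  exists2 dl : R, 0 < dl & forall s y, `|c - s| < dl -> outer_normal K y s ->
    suppf K c - eta <= dotu y c.
Proof.
move=> cK eta0; have [dl dl0 equi] := dotu_equicontinuous c cK (divr_gt0 eta0 (ltr0n R 2)).
exists dl => // s y cs ys; have [yc yc_c] := outer_normal_exists c cK.
rewrite (suppf_outer_normal yc_c).
have := equi s yc cs yc_c.1; have := equi s y cs ys.1; have := ys.2 _ yc_c.1.
rewrite !ler_norml; lra.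
Qed.

End SupportPoints.

Section Connected.
Variable T : topologicalType.
Implicit Types A C D N : set T.

Lemma connected_closed_cover A C D : connected A -> closed C -> closed D ->
  A `<=` C `|` D -> A `&` C !=set0 -> A `&` D !=set0 -> A `&` C `&` D !=set0.
Proof.
move=> cA cC cD ACD [x [Ax Cx]] [y [Ay Dy]]; apply/set0P/negP => /eqP ACD0.
have ACD_empty z : A z -> C z -> D z -> False.
  by move=> Az Cz Dz; have : (A `&` C `&` D) z by []; rewrite ACD0.
have sep : separated (A `&` C) (A `&` D).
  split; apply/seteqP; split=> // z [].
    by move=> /closureI[_]; rewrite -(closure_id C).1 // => Cz [Az Dz]; exact: ACD_empty Az Cz Dz.
  by move=> [Az Cz] /closureI[_]; rewrite -(closure_id D).1 // => Dz; exact: ACD_empty Az Cz Dz.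
have [AC|AD] : A `<=` A `&` C \/ A `<=` A `&` D.
  by apply: connected_subset sep _ cA => z Az; case: (ACD z Az); [left|right].
- by have [_ Cy] := AC y Ay; exact: ACD_empty Ay Cy Dy.
- by have [_ Dx] := AD x Ax; exact: ACD_empty Ax Cx Dx.
Qed.

Lemma connected_closed_frontier A N : connected A -> closed N ->
  A `&` N !=set0 -> ~ A `<=` N ->
  exists c, [/\ A c, N c & closure (A `\` N) c].
Proof.
move=> cA cN [x [Ax Nx]] AN; apply: contrapT => no_frontier.
have sep : separated (A `&` N) (A `\` N).
  split; apply/seteqP; split=> // z [].
    by move=> /closureI[_]; rewrite -(closure_id N).1 // => Nz [].
  by move=> [Az Nz] clz; apply: no_frontier; exists z.
have [AN'|AN'] : A `<=` A `&` N \/ A `<=` A `\` N.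
  by apply: connected_subset sep _ cA => z Az; have [Nz|Nz] := pselect (N z); [left|right].
- by apply: AN => z /AN' [].
- by have [_] := AN' x Ax.
Qed.

End Connected.

Section Faces.
Variable R : realType.
Implicit Types (K P : set (R * R)) (y : R * R) (s t : R).

Lemma closed_outer_normal_dirs K P : convex_body K -> closed P ->
  closed [set s | exists2 y, outer_normal K y s & P y].
Proof.
move=> cK cP c clc.
have near_dir dl : 0 < dl -> exists s y, [/\ `|c - s| < dl, outer_normal K y s & P y].
  move=> dl0; have [s [[y ys Py] cs]] : [set s | exists2 y, outer_normal K y s & P y]
      `&` [set s | `|c - s| < dl] !=set0.
    by apply: clc; apply/nbhs_normP; exists dl.
  by exists s, y.
have [s0 [y0 [_ y0s0 Py0]]] := near_dir 1 ltr01.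
have cKP : compact (K `&` P).
  have [_ cpK _] := cK; apply: (subclosed_compact _ cpK); last exact: subIsetl.
  exact: closedI (compact_closed _ cpK) cP.
have [y1 /[!inE] -[Ky1 Py1] y1max] := compact_EVT_max (ex_intro _ y0 (conj y0s0.1 Py0))
  cKP (continuous_subspaceT (@continuous_dotu _ c)).
exists y1 => //; apply: outer_normal_suppf => //.
apply/eqP; rewrite eq_le dotu_le_suppf //=; apply/ler_addgt0Pr => e e0.
have [dl dl0 near_c] := outer_normal_near c cK e0.
have [s [y [cs ys Py]]] := near_dir dl dl0.
have := near_c s y cs ys; have := y1max y; rewrite inE => /(_ (conj ys.1 Py)); lra.
Qed.

Lemma closed_outer_normal K y : convex_body K -> closed (outer_normal K y).
Proof.
move=> cK; have -> : outer_normal K y = [set s | exists2 z, outer_normal K z s & [set y] z].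
  by apply/seteqP; split=> s; [exists y | case=> z zs <-].
apply: closed_outer_normal_dirs => //.
exact/accessible_closed_set1/hausdorff_accessible/norm_hausdorff.
Qed.

Lemma outer_normal_ivt K y0 y1 s th (l : R) : convex_body K ->
  outer_normal K y0 s -> outer_normal K y1 s -> dotu y0 th <= l <= dotu y1 th ->
  exists2 y, outer_normal K y s & dotu y th = l.
Proof.
move=> cK y0s y1s /andP[y0l ly1].
have [eq01|ne01] := eqVneq (dotu y0 th) (dotu y1 th).
  by exists y0 => //; apply/eqP; rewrite eq_le y0l eq01 ly1.
have lt01 : dotu y0 th < dotu y1 th by rewrite lt_neqAle ne01 (le_trans y0l ly1).
set m := (l - dotu y0 th) / (dotu y1 th - dotu y0 th).
have m01 : 0 <= m <= 1.
  rewrite /m divr_ge0 ?subr_ge0 ?(ltW lt01) //=.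
  by rewrite ler_pdivrMr ?subr_gt0 // mul1r lerD2r.
exists ((1 - m) * y0.1 + m * y1.1, (1 - m) * y0.2 + m * y1.2).
  exact: outer_normal_segment.
transitivity (dotu y0 th + m * (dotu y1 th - dotu y0 th)); first by rewrite /dotu /=; ring.
by rewrite /m divfK ?subr_eq0 1?eq_sym // addrC subrK.
Qed.

Lemma rev_sph_image_ivt K (w : set R) q p s1 s2 th (l : R) :
  convex_body K -> connected w -> w s1 -> w s2 ->
  outer_normal K q s1 -> outer_normal K p s2 -> dotu q th <= l <= dotu p th ->
  exists2 y, rev_sph_image K w y & dotu y th = l.
Proof.
move=> cK cw ws1 ws2 qs1 ps2 /andP[ql lp].
pose dirs P := [set s | exists2 y, outer_normal K y s & P y].
have closed_dotu_le : closed [set y | dotu y th <= l].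
  exact: (continuous_closedP _).1 (@continuous_dotu _ th) _ (@closed_le _ l).
have closed_dotu_ge : closed [set y | l <= dotu y th].
  exact: (continuous_closedP _).1 (@continuous_dotu _ th) _ (@closed_ge _ l).
have [s [[ws [y0 y0s y0l]] [y1 y1s y1l]]] :
    w `&` dirs [set y | dotu y th <= l] `&` dirs [set y | l <= dotu y th] !=set0.
  apply: connected_closed_cover => //; try exact: closed_outer_normal_dirs.
  - move=> s _; have [y ys] := outer_normal_exists s cK.
    by have [yl|/ltW yl] := leP (dotu y th) l; [left|right]; exists y.
  - by exists s1; split=> //; exists q.
  - by exists s2; split=> //; exists p.
have [y ys yl] := outer_normal_ivt cK y0s y1s (introT andP (conj y0l y1l)).
by exists y => //; split; [exact: ys.1 | exists s => //; exact/esym/suppf_outer_normal].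
Qed.

End Faces.

Section Hausdorff.
Variable R : realType.
Implicit Types (A C : set (R * R)) (x y : R * R).

Lemma diam_ge0 C : (0 <= diam C)%E.
Proof. by apply: ereal_sup_ubound; left. Qed.

Lemma dist2_le_diam C x y : C x -> C y -> ((dist2 x y)%:E <= diam C)%E.
Proof. by move=> Cx Cy; apply: ereal_sup_ubound; right; exists x => //; exists y. Qed.

Lemma diam_set1 x : diam [set x] = 0%E.
Proof.
apply/eqP; rewrite eq_le diam_ge0 andbT; apply: ge_ereal_sup.
move=> _ [->|[_ -> [_ -> <-]]] //.
by rewrite /dist2 !subrr expr0n /= addr0 sqrtr0.
Qed.

Lemma hausdorff1_subsingleton A : is_subset1 A -> (hausdorff1 A <= 0)%E.
Proof.
move=> A1; have [v Av] : exists v, A `<=` [set v].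
  have [[v Av]|/forallNP A0] := pselect (exists v, A v).
    by exists v => x Ax; exact: A1.
  by exists 0 => x /A0.
apply: ge_ereal_sup => _ [d /= d0 <-].
apply: (@le_trans _ _ (\sum_(0 <= n <oo) diam [set v])%E).
  apply: ereal_inf_lbound; exists (fun=> [set v]) => //; split=> [x /Av ->|n].
    by exists 0%N.
  by rewrite diam_set1 lee_fin ltW.
by rewrite eseries0 // => n _ _; rewrite diam_set1.
Qed.

(* Cauchy-Schwarz, through Lagrange's identity. *)
Lemma dotu_dist_le x y t : `|dotu x t - dotu y t| <= dist2 x y.
Proof.
rewrite /dist2 -sqrtr_sqr; apply: ler_wsqrtr.
have -> : dotu x t - dotu y t = (x.1 - y.1) * cos t + (x.2 - y.2) * sin t.
  by rewrite /dotu; ring.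
have := cos2Dsin2 t; move: (x.1 - y.1) (x.2 - y.2) (cos t) (sin t) => a b c s cs1.
rewrite -subr_ge0 -[a ^+ 2 + b ^+ 2]mulr1 -cs1.
have -> : (a ^+ 2 + b ^+ 2) * (c ^+ 2 + s ^+ 2) - (a * c + b * s) ^+ 2 = (a * s - b * c) ^+ 2.
  by ring.
exact: sqr_ge0.
Qed.

(* Each set of a cover of [A] projects into an interval of length twice its
   diameter, and these intervals cover [[al, be]]. *)
Lemma proj_itv_le_diam_series A (C : nat -> set (R * R)) th (al be : R) :
  al < be -> A `<=` \bigcup_n C n -> (forall n, diam (C n) < +oo)%E ->
  (forall l, al <= l <= be -> exists2 y, A y & dotu y th = l) ->
  (((be - al) / 2)%:E <= \sum_(0 <= n <oo) diam (C n))%E.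
Proof.
move=> ab AC Cfin Aproj.
have diamE n : diam (C n) = (fine (diam (C n)))%:E.
  by rewrite fineK // ge0_fin_numE ?diam_ge0.
have d0 n : 0 <= fine (diam (C n)) by apply: fine_ge0; exact: diam_ge0.
pose m n := dotu [get x | C n x] th.
pose I n := `[m n - fine (diam (C n)), m n + fine (diam (C n))]%classic.
have cover : `[al, be]%classic `<=` \bigcup_n I n.
  move=> l /=; rewrite in_itv /= => /Aproj[y Ay yl].
  have [n _ Cny] := AC y Ay; exists n => //.
  have Cnm : C n [get x | C n x] by apply: getPex; exists y.
  have dist_le : dist2 y [get x | C n x] <= fine (diam (C n)).
    by rewrite -lee_fin -diamE; exact: dist2_le_diam.
  have := le_trans (dotu_dist_le y _ th) dist_le.
  by rewrite yl /I /= in_itv /= ler_distl.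
have mu_le : (lebesgue_measure `[al, be]%classic
    <= \sum_(0 <= n <oo) lebesgue_measure (I n))%E.
  exact: (@measure_sigma_subadditive _ _ (measurableTypeR R) lebesgue_measure _ I
    (fun n => measurable_itv _) (measurable_itv _) cover).
have mu_I n : (lebesgue_measure (I n) <= 2%:E * diam (C n))%E.
  rewrite /I lebesgue_measure_itv /= lte_fin diamE -EFinM.
  by case: ifP => _; rewrite lee_fin; [have := d0 n; lra | rewrite mulr_ge0].
have := le_trans mu_le (lee_nneseries (fun n _ _ => measure_ge0 _ _) (fun n _ => mu_I n)).
rewrite nneseriesZl; last by move=> n _; exact: diam_ge0.
rewrite lebesgue_measure_itv /= lte_fin ab -EFinD.
case: (\sum_(0 <= n <oo) diam (C n))%E => [s||] //=.
- by rewrite -EFinM !lee_fin; lra.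
- by move=> _; exact: leey.
- by rewrite gt0_muleNy ?lte_fin // leeNy_eq.
Qed.

Lemma hausdorff1_gt0 A th (al be : R) : al < be ->
  (forall l, al <= l <= be -> exists2 y, A y & dotu y th = l) -> (0 < hausdorff1 A)%E.
Proof.
move=> ab Aproj; apply: (@lt_le_trans _ _ ((be - al) / 2)%:E).
  by rewrite lte_fin divr_gt0 // subr_gt0.
apply: (@le_trans _ _ (hausdorff1_delta 1 A)); last by apply: ereal_sup_ubound; exists 1 => //=.
apply: le_ereal_inf_tmp => _ [C [AC Cd] <-].
apply: proj_itv_le_diam_series Aproj => // n.
by rewrite (le_lt_trans (Cd n)) ?ltey.
Qed.

End Hausdorff.

Section SurfaceArea.
Variable R : realType.
Implicit Types (K : set (R * R)) (x y : R * R).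

Lemma connected_arc (c e : R) : connected (Defs.arc c e).
Proof.
have -> : Defs.arc c e = `]c - e, c + e[%classic by apply/seteqP; split=> x /=; rewrite in_itv.
by apply/connected_intervalP; exact: interval_is_interval.
Qed.

Lemma dotu_separates x y : x <> y -> exists th, dotu x th != dotu y th.
Proof.
move=> xy; have [e1|ne1] := eqVneq x.1 y.1; last first.
  by exists 0; rewrite /dotu cos0 sin0 !mulr0 !addr0 !mulr1.
exists (pi / 2); rewrite /dotu cos_pihalf sin_pihalf !mulr0 !add0r !mulr1.
by apply/eqP => e2; apply: xy; move: x y e1 e2 => [? ?] [? ?] /= -> ->.
Qed.

Lemma surf_area_gt0 K (w : set R) q p s1 s2 : convex_body K -> connected w ->
  w s1 -> w s2 -> outer_normal K q s1 -> outer_normal K p s2 -> q <> p ->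
  (0 < surf_area K w)%E.
Proof.
move=> cK cw + + + + /dotu_separates[th].
wlog lt_qp : q p s1 s2 / dotu q th < dotu p th.
  move=> W ws1 ws2 qs1 ps2 qp; have [lt|gt] := ltP (dotu q th) (dotu p th).
    exact: (W q p s1 s2).
  by apply: (W p q s2 s1) => //; rewrite 1?lt_neqAle eq_sym // qp gt.
move=> ws1 ws2 qs1 ps2 _.
apply: (hausdorff1_gt0 lt_qp) => l ql.
exact: rev_sph_image_ivt cK cw ws1 ws2 qs1 ps2 ql.
Qed.

(* Directions just past the frontier of the normal cone of [y] have support
   points other than [y]. *)
Lemma outer_normal_frontier_normals K y (A : set R) : convex_body K -> connected A ->
  A `&` outer_normal K y !=set0 -> ~ A `<=` outer_normal K y ->
  exists c, [/\ A c, outer_normal K y c & normals K c].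
Proof.
move=> cK cA Ay nAy.
have [c [Ac yc cl_c]] := connected_closed_frontier cA (closed_outer_normal (y := y) cK) Ay nAy.
exists c; split=> // e e0.
have [s [[As ys] cs]] : (A `\` outer_normal K y) `&` [set s | `|c - s| < e] !=set0.
  by apply: cl_c; apply/nbhs_normP; exists e.
have [p ps] := outer_normal_exists s cK.
apply: (surf_area_gt0 cK (@connected_arc c e) _ _ yc ps).
- by rewrite /Defs.arc /= ltrDl gtrBl e0.
- by rewrite /Defs.arc /= -ltr_distlC.
- by move=> yp; apply: ys; rewrite yp.
Qed.

End SurfaceArea.

Section Plane.
Variable R : realType.
Implicit Types (K : set (R * R)) (x y q : R * R).

Lemma exists_angle (c s : R) : c ^+ 2 + s ^+ 2 = 1 -> exists t, cos t = c /\ sin t = s.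
Proof.
move=> cs1.
have c_in : -1 <= c <= 1.
  rewrite -ler_norml -(@ler_pXn2r _ 2) ?nnegrE // expr1n real_normK ?num_real //.
  by rewrite -cs1 lerDl sqr_ge0.
have sin_acos : sin (acos c) = `|s| by rewrite sin_acos // -cs1 addrC addKr sqrtr_sqr.
have [s0|s0] := leP 0 s.
  by exists (acos c); rewrite acosK ?in_itv // sin_acos ger0_norm.
by exists (- acos c); rewrite cosN sinN acosK ?in_itv // sin_acos ltr0_norm ?opprK.
Qed.

Lemma dotu_inj2 (a b : R) x y : 0 < b - a < pi ->
  dotu x a = dotu y a -> dotu x b = dotu y b -> x = y.
Proof.
move=> ab xya xyb; have sin_ba : sin (b - a) != 0 by rewrite gt_eqF // sin_gt0_pi.
have e1 : (x.1 - y.1) * sin (b - a) =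
    sin b * (dotu x a - dotu y a) - sin a * (dotu x b - dotu y b).
  by rewrite /dotu sinB; ring.
have e2 : (x.2 - y.2) * sin (b - a) =
    cos a * (dotu x b - dotu y b) - cos b * (dotu x a - dotu y a).
  by rewrite /dotu sinB; ring.
move: e1 e2; rewrite xya xyb !subrr !mulr0 subrr.
move=> /eqP; rewrite mulf_eq0 (negbTE sin_ba) orbF subr_eq0 => /eqP e1.
move=> /eqP; rewrite mulf_eq0 (negbTE sin_ba) orbF subr_eq0 => /eqP e2.
by move: x y e1 e2 {xya xyb} => [? ?] [? ?] /= -> ->.
Qed.

Lemma nearest_point_obtuse K x : convex_body K -> exists2 q, K q &
  forall y, K y -> (x.1 - q.1) * (y.1 - q.1) + (x.2 - q.2) * (y.2 - q.2) <= 0.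
Proof.
move=> [K0 cpK convK].
pose g y := (x.1 - y.1) ^+ 2 + (x.2 - y.2) ^+ 2.
have g_cont : continuous g.
  by move=> y; apply: cvgD; apply: cvgM; apply: cvgB; try apply: cvg_cst;
    (exact: cvg_fst || exact: cvg_snd).
have [q /[!inE] Kq qmin] := compact_EVT_min K0 cpK (continuous_subspaceT g_cont).
exists q => // y Ky; rewrite leNgt; apply/negP => D0.
set D := _ + _ in D0; set E := (y.1 - q.1) ^+ 2 + (y.2 - q.2) ^+ 2.
have E0 : 0 <= E by rewrite addr_ge0 ?sqr_ge0.
(* Moving a fraction [l] of the way from [q] to [y] would get closer to [x]. *)
set l := D / (D + E).
have DE0 : 0 < D + E by lra.
have l0 : 0 < l by rewrite divr_gt0.
have l1 : l <= 1 by rewrite ler_pdivrMr // mul1r lerDl.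
have lE : l * E <= D by rewrite mulrAC ler_pdivrMr // ler_pM2l // lerDr ltW.
have := qmin ((1 - l) * q.1 + l * y.1, (1 - l) * q.2 + l * y.2).
rewrite inE => /(_ (convK _ _ Kq Ky l _)); rewrite ltW //= => /(_ l1).
have -> : g ((1 - l) * q.1 + l * y.1, (1 - l) * q.2 + l * y.2) =
    g q + l * (l * E - 2 * D) by rewrite /g /E /D /=; ring.
by rewrite lerDl pmulr_rge0 //; lra.
Qed.

Lemma exterior_point_normal K x : convex_body K -> ~ K x ->
  exists q t r, [/\ outer_normal K q t, 0 < r &
    forall u, dotu x u = dotu q u + r * cos (u - t)].
Proof.
move=> cK Kx; have [q Kq obtuse] := nearest_point_obtuse x cK.
set d1 := x.1 - q.1 in obtuse *; set d2 := x.2 - q.2 in obtuse *.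
set r := Num.sqrt (d1 ^+ 2 + d2 ^+ 2).
have r0 : 0 < r.
  rewrite sqrtr_gt0 lt_neqAle addr_ge0 ?sqr_ge0 // andbT eq_sym.
  rewrite paddr_eq0 ?sqr_ge0 // !sqrf_eq0 !subr_eq0; apply/negP => /andP[/eqP e1 /eqP e2].
  by apply: Kx; move: x e1 e2 {obtuse d1 d2 r} => [? ?] /= -> ->; case: q Kq.
have [t [ct st]] : exists t, cos t = d1 / r /\ sin t = d2 / r.
  apply: exists_angle; rewrite !expr_div_n -mulrDl sqr_sqrtr ?addr_ge0 ?sqr_ge0 //.
  by rewrite divff // gt_eqF // -sqrtr_gt0.
exists q, t, r; split=> // [|u].
  split=> // z Kz; rewrite -subr_le0 /dotu ct st.
  have -> : z.1 * (d1 / r) + z.2 * (d2 / r) - (q.1 * (d1 / r) + q.2 * (d2 / r)) =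
      (d1 * (z.1 - q.1) + d2 * (z.2 - q.2)) / r by field; rewrite gt_eqF.
  by rewrite pmulr_lle0 ?invr_gt0 // obtuse.
by rewrite /dotu cosB ct st /d1 /d2; field; rewrite gt_eqF.
Qed.

End Plane.

Section Window.
Variable R : realType.
Variable Pi : set R.
Hypothesis Pi_per : periodic2pi Pi.
Implicit Types (K : set (R * R)) (y : R * R).

Lemma suppf_sub_dotu_gt0 K y (u1 u2 : R) : convex_body K -> K y -> u1 <= u2 ->
  (forall u, u1 <= u <= u2 -> ~ outer_normal K y u) ->
  exists2 m : R, 0 < m & forall u, u1 <= u <= u2 -> m <= suppf K u - dotu y u.
Proof.
move=> cK Ky u12 no_normal.
have cont : continuous (fun u => suppf K u - dotu y u).
  by move=> u; apply: cvgB; [exact: continuous_suppf | exact: continuous_dotu_angle].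
have [u0 /[!in_itv]/= u0_in u0_min] := EVT_min u12 (continuous_subspaceT cont).
exists (suppf K u0 - dotu y u0) => [|u u_in]; last by apply: u0_min; rewrite in_itv.
rewrite lt_neqAle subr_ge0 dotu_le_suppf // andbT eq_sym subr_eq0.
by apply/eqP => yu0; apply: (no_normal u0 u0_in); apply: outer_normal_suppf.
Qed.

(* Push [y] by [m / 2] in direction [sg]: the new point stays in every
   half-plane of [Pi], so it is in [K], which forces [u_s] away from [u_sg]. *)
Lemma outer_normal_push K y s sg (m : R) : convex_body K ->
  \bigcap_(t in Pi) halfplane K t `<=` K -> outer_normal K y s -> 0 < m ->
  (forall t, Pi t -> 0 < cos (t - sg) -> m <= suppf K t - dotu y t) ->
  cos (s - sg) <= 0.
Proof.
move=> cK halfK ys m0 gap; have m20 : 0 < m / 2 by rewrite divr_gt0.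
pose z := (y.1 + m / 2 * cos sg, y.2 + m / 2 * sin sg).
have dotu_z u : dotu z u = dotu y u + m / 2 * cos (u - sg).
  by rewrite /dotu /= cosB; ring.
have Kz : K z.
  apply: halfK => t Pt; rewrite /halfplane /= dotu_z.
  have := dotu_le_suppf t cK ys.1; have [ct|ct] := ltP 0 (cos (t - sg)).
    have := gap t Pt ct; have := ler_piMr (ltW m20) (cos_le1 (t - sg)); lra.
  have : m / 2 * cos (t - sg) <= 0 by rewrite pmulr_rle0.
  lra.
by have := ys.2 z Kz; rewrite dotu_z gerDl pmulr_rle0.
Qed.

Lemma outer_normal_window K y s sg (u1 u2 : R) : convex_body K ->
  \bigcap_(t in Pi) halfplane K t `<=` K -> outer_normal K y s ->
  `|s - sg| < pi / 2 -> u1 <= u2 ->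
  (forall u, u1 <= u <= u2 -> ~ outer_normal K y u) ->
  (forall t, Pi t -> sg - pi / 2 < t < sg + pi / 2 -> u1 <= t <= u2) -> False.
Proof.
move=> cK halfK ys s_sg u12 no_normal window.
have [m m0 gap] := suppf_sub_dotu_gt0 cK ys.1 u12 no_normal.
suff : cos (s - sg) <= 0 by rewrite leNgt cos_gt0_pihalf // -ltr_norml.
apply: (outer_normal_push cK halfK ys m0) => t Pt /cos_gt0_shift[k t_in].
rewrite -(suppf_periodicz K k) -(dotu_periodicz k); apply/gap/window => //.
exact/periodic2piz.
Qed.

End Window.

Lemma open_arc_itv (R : realType) (a b u : R) : b - a <= 2 * pi ->
  a <= u <= b -> open_arc a b u -> a < u < b.
Proof.
move=> ab /andP[au ub] [k /andP[ak kb]]; have pi0 : 0 < pi :> R := pi_gt0 R.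
have [k0|[k1|k1]] : k = 0 \/ (1 <= k)%R \/ (k <= -1)%R by lia.
- by rewrite k0 mul0r addr0 in ak kb; rewrite ak kb.
- have : 1 * (2 * pi) <= k%:~R * (2 * pi) :> R by rewrite ler_pM2r ?mulr_gt0 // ler1z.
  lra.
- have : k%:~R * (2 * pi) <= -1 * (2 * pi) :> R.
    by rewrite ler_pM2r ?mulr_gt0 // -(mulrN1z 1) ler_int.
  lra.
Qed.

Section Gaps.
Variable R : realType.
Variable Pi : set R.
Hypothesis Pi_per : periodic2pi Pi.
Variable I : Type.
Variables a b : I -> R.
Hypothesis arc_short : forall i, a i < b i /\ b i - a i < pi.
Hypothesis arc_disj :
  forall i j, i <> j -> open_arc (a i) (b i) `&` open_arc (a j) (b j) = set0.
Hypothesis compl_union : ~` Pi = \bigcup_i open_arc (a i) (b i).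
Implicit Types (K : set (R * R)) (y : R * R).

Lemma gap_notin i u : a i < u < b i -> ~ Pi u.
Proof.
move=> u_in Pu; have : (~` Pi) u.
  by rewrite compl_union; exists i => //; exists 0; rewrite mul0r addr0.
by apply.
Qed.

Lemma notin_gap u : ~ Pi u -> exists i (k : int), a i < u + k%:~R * (2 * pi) < b i.
Proof. by move=> Pu; have : (~` Pi) u by []; rewrite compl_union => -[i _ [k]]; exists i, k. Qed.

Lemma gap_closure_notin i u : a i <= u <= b i -> ~ Pi u -> a i < u < b i.
Proof.
move=> /andP[au ub] /notin_gap[j [k /andP[ak kb]]]; have [ab ba] := arc_short i.
suff ij : i = j.
  by subst j; apply: open_arc_itv; [lra | rewrite au ub | exists k; rewrite ak].
set lo := Num.max (a i) (a j - k%:~R * (2 * pi)).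
set hi := Num.min (b i) (b j - k%:~R * (2 * pi)).
have lo_hi : lo < hi by rewrite lt_min !gt_max; apply/andP; split; apply/andP; split; lra.
have [lo1 lo2] : a i <= lo /\ a j - k%:~R * (2 * pi) <= lo by rewrite !le_max !lexx ?orbT.
have [hi1 hi2] : hi <= b i /\ hi <= b j - k%:~R * (2 * pi) by rewrite !ge_min !lexx ?orbT.
apply: contrapT => /arc_disj/seteqP[sub0 _]; apply: (sub0 ((lo + hi) / 2)).
by split; [exists 0 | exists k]; rewrite ?mul0r ?addr0; apply/andP; split; lra.
Qed.

Lemma gap_ends_in i : Pi (a i) /\ Pi (b i).
Proof.
have [ab _] := arc_short i.
by split; apply: contrapT => /(gap_closure_notin (i := i));
  rewrite lexx ltW // ltxx ?andbF => /(_ isT).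
Qed.

Lemma outer_normal_gap_right K i y s : convex_body K ->
  K = \bigcap_(t in Pi) halfplane K t -> a i < s < b i ->
  outer_normal K y s -> outer_normal K y (b i).
Proof.
move=> cK HK /andP[a_s s_b] ys; apply: contrapT => yb; have [ab ba] := arc_short i.
apply: (outer_normal_window Pi_per (sg := a i + pi / 2) (u1 := b i) (u2 := a i + pi) cK _ ys).
- by rewrite -HK.
- by rewrite ltr_norml; lra.
- lra.
- by move=> u /andP[bu ua] yu; apply: yb; apply: (outer_normal_between ys yu); lra.
- move=> t Pt /andP[a_t t_a]; apply/andP; split; last lra.
  by rewrite leNgt; apply/negP => tb; apply: (gap_notin (i := i) _ Pt); lra.
Qed.

Lemma outer_normal_gap_left K i y s : convex_body K ->
  K = \bigcap_(t in Pi) halfplane K t -> a i < s < b i ->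
  outer_normal K y s -> outer_normal K y (a i).
Proof.
move=> cK HK /andP[a_s s_b] ys; apply: contrapT => ya; have [ab ba] := arc_short i.
apply: (outer_normal_window Pi_per (sg := b i - pi / 2) (u1 := b i - pi) (u2 := a i) cK _ ys).
- by rewrite -HK.
- by rewrite ltr_norml; lra.
- lra.
- by move=> u /andP[bu ua] yu; apply: ya; apply: (outer_normal_between yu ys); lra.
- move=> t Pt /andP[bt tb]; apply/andP; split; first lra.
  by rewrite leNgt; apply/negP => t_a; apply: (gap_notin (i := i) _ Pt); lra.
Qed.

Lemma normals_sub_of_halfplanes K : convex_body K ->
  K = \bigcap_(t in Pi) halfplane K t -> normals K `<=` Pi.
Proof.
move=> cK HK t Nt; apply: contrapT => /notin_gap[i [k /andP[a_t t_b]]].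
have [ab ba] := arc_short i.
set e := Num.min (t + k%:~R * (2 * pi) - a i) (b i - (t + k%:~R * (2 * pi))).
have e0 : 0 < e by rewrite lt_min !subr_gt0 a_t t_b.
have [ea eb] : e <= t + k%:~R * (2 * pi) - a i /\ e <= b i - (t + k%:~R * (2 * pi)).
  by rewrite !ge_min !lexx ?orbT.
have ends y : rev_sph_image K (Defs.arc t e) y ->
    outer_normal K y (a i) /\ outer_normal K y (b i).
  move=> [Ky [s /andP[ts st] ys]].
  have ys' : outer_normal K y (s + k%:~R * (2 * pi)).
    exact/outer_normal_periodicz/outer_normal_suppf.
  have s_in : a i < s + k%:~R * (2 * pi) < b i by apply/andP; split; lra.
  by split; [exact: outer_normal_gap_left s_in ys' | exact: outer_normal_gap_right s_in ys'].
have : is_subset1 (rev_sph_image K (Defs.arc t e)).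
  move=> y z /ends[ya yb] /ends[za zb]; apply: (@dotu_inj2 _ (a i) (b i)).
  - by rewrite subr_gt0 ab.
  - by rewrite -(suppf_outer_normal ya) (suppf_outer_normal za).
  - by rewrite -(suppf_outer_normal yb) (suppf_outer_normal zb).
by move/hausdorff1_subsingleton/(lt_le_trans (Nt e e0)); rewrite ltxx.
Qed.

(* Otherwise the frontier of the normal cone of [q] inside the closed gap would
   be a normal direction of [K] in the gap. *)
Lemma normal_cone_gap K i q t : convex_body K -> normals K `<=` Pi ->
  a i < t < b i -> outer_normal K q t -> outer_normal K q (a i) /\ outer_normal K q (b i).
Proof.
move=> cK NPi /andP[a_t t_b] qt.
have no_normals c : a i < c < b i -> ~ normals K c.
  by move=> c_in /NPi; exact: gap_notin c_in.
split; apply: contrapT => qe.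
- have [c [/= /[!in_itv]/= /andP[ac ct] qc Nc]] :
      exists c, [/\ `[a i, t]%classic c, outer_normal K q c & normals K c].
    apply: outer_normal_frontier_normals cK (@segment_connected _ _ _) _ _.
      by exists t; split=> //=; rewrite in_itv /= lexx ltW.
    by move=> /(_ (a i)) sub; apply: qe; apply: sub; rewrite /= in_itv /= lexx ltW.
  apply: (no_normals c _ Nc); rewrite (le_lt_trans ct t_b) andbT lt_neqAle ac andbT.
  by apply: contra_not_neq qe => ->.
- have [c [/= /[!in_itv]/= /andP[tc cb] qc Nc]] :
      exists c, [/\ `[t, b i]%classic c, outer_normal K q c & normals K c].
    apply: outer_normal_frontier_normals cK (@segment_connected _ _ _) _ _.
      by exists t; split=> //=; rewrite in_itv /= lexx ltW.
    by move=> /(_ (b i)) sub; apply: qe; apply: sub; rewrite /= in_itv /= lexx ltW.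
  apply: (no_normals c _ Nc); rewrite (lt_le_trans a_t tc) /= lt_neqAle cb andbT.
  by apply: contra_not_neq qe => <-.
Qed.

Lemma halfplanes_of_normals_sub K : convex_body K -> normals K `<=` Pi ->
  K = \bigcap_(t in Pi) halfplane K t.
Proof.
move=> cK NPi; apply/seteqP; split=> [y Ky t _|x xH]; first exact: dotu_le_suppf.
apply: contrapT => /(exterior_point_normal cK)[q [t0 [r [qt0 r0 dotu_x]]]].
have not_normal u : Pi u -> 0 < cos (u - t0) -> ~ outer_normal K q u.
  move=> Pu cu qu; move: (xH u Pu); rewrite /halfplane /= dotu_x (suppf_outer_normal qu).
  by rewrite gerDl pmulr_rle0 // leNgt cu.
have /notin_gap[i [k t1_in]] : ~ Pi t0.
  by move=> Pt0; apply: (not_normal t0 Pt0) qt0; rewrite subrr cos0.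
have [qa qb] := normal_cone_gap cK NPi t1_in (proj2 (outer_normal_periodicz _ _ _ _) qt0).
have [ab ba] := arc_short i; have [Pa Pb] := gap_ends_in i.
move: t1_in; set t1 := t0 + _ => /andP[a_t1 t1_b].
have cos_shift u : cos (u - t0) = cos (u - t1).
  by rewrite opprD addrA -mulNr -intrN cos_periodicz.
have [b_t1|t1_b'] := ltP (b i - t1) (pi / 2).
- by apply: (not_normal (b i) Pb) qb; rewrite cos_shift cos_gt0_pihalf //; apply/andP; split; lra.
- by apply: (not_normal (a i) Pa) qa; rewrite cos_shift cos_gt0_pihalf //; apply/andP; split; lra.
Qed.

End Gaps.

Theorem theoremA51 (R : realType) (Pi : set R)
  (Pi_per : periodic2pi Pi) (Pi_closed : closed Pi)
  (I : Type) (a b : I -> R)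
  (arc_short : forall i, a i < b i /\ b i - a i < pi)
  (arc_disj : forall i j, i <> j -> open_arc (a i) (b i) `&` open_arc (a j) (b j) = set0)
  (compl_union : ~` Pi = \bigcup_i open_arc (a i) (b i)) :
  forall K : set (R * R), convex_body K ->
    (K = \bigcap_(t in Pi) halfplane K t <-> normals K `<=` Pi).
Proof.
move=> K cK; split.
  exact: (normals_sub_of_halfplanes Pi_per arc_short compl_union cK).
exact: (halfplanes_of_normals_sub arc_short arc_disj compl_union cK).
Qed.
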